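(* For every index coding instance $\mathcal{I}=\{(i\mid A_i):i\in[m]\}$, $\beta_{\text{P-UMCD}}(\mathcal{I})\le\beta_{\text{PCC}}(\mathcal{I})$.
   Context: For $M\subseteq[m]$, the subinstance $M$ has receivers $M$ and side information $A_i\cap M$; $\beta_{\text{MDS}}(M)=|M|-\min_{i\in M}|M\cap A_i|$. $\beta_{\text{PCC}}(\mathcal{I})=\min\sum_{j}\beta_{\text{MDS}}(M_j)$ and $\beta_{\text{P-UMCD}}(\mathcal{I})=\min\sum_j\beta_{\text{UMCD}}(M_j)$, both minima over partitions of $[m]$ into pairwise disjoint nonempty sets $M_1,\dots,M_n$. UMCD algorithm on a (sub)instance with receiver set $V$: $B_i=V\setminus(A_i\cup\{i\})$ (side information taken within $V$); for a $0/1$ matrix $\boldsymbol{G}$, $\boldsymbol{G}_{[k]}^L$ is the submatrix of the first $k$ rows and columns $L$, and $\mathrm{mcm}$ is the maximum number of $1$-entries in distinct rows and columns (0 if no columns); $N=V$, $k=0$; while $N\ne\emptyset$: $k\leftarrow k+1$; pick $w\in N$ minimizing $|A_w|$ (arbitrary tie-breaking); row $k$ of $\boldsymbol{G}$ is the indicator of $\{w\}\cup A_w$; remove $w$; remove every $i\in N$ with $\mathrm{mcm}(\boldsymbol{G}_{[k]}^{\{i\}\cup B_i})=\mathrm{mcm}(\boldsymbol{G}_{[k]}^{B_i})+1$; output $\beta_{\text{UMCD}}=k$ (a fixed execution for each subinstance). *)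

From mathcomp Require Import all_boot.
Unset Printing Implicit Defensive.

Section IC.
Variable m : nat.
Variable A : 'I_m -> {set 'I_m}.

(* beta_MDS(M) = |M| - min_{i in M} |M :&: A i|  (the default #|M| of the
   min is irrelevant for nonempty M, as every |M :&: A i| <= |M|) *)
Definition beta_MDS (M : {set 'I_m}) : nat :=
  #|M| - \big[minn/#|M|]_(i in M) #|M :&: A i|.

Definition is_partition (P : {set {set 'I_m}}) : bool := partition P [set: 'I_m].

Definition beta_PCC : nat :=
  \big[minn/m]_(P : {set {set 'I_m}} | is_partition P) \sum_(M in P) beta_MDS M.

(* A 0/1 matrix with rows given as a sequence of sets (row r = indicator of
   nth set0 G r), columns indexed by 'I_m. *)
Definition is_matching (G : seq {set 'I_m}) (L : {set 'I_m})
    (S : {set 'I_(size G) * 'I_m}) : bool :=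
  [forall p in S, (p.2 \in L) && (p.2 \in (nth (set0 : {set 'I_m}) G p.1))] &&
  [forall p in S, forall q in S, ((p.1 == q.1) || (p.2 == q.2)) ==> (p == q)].

Definition mcm (G : seq {set 'I_m}) (L : {set 'I_m}) : nat :=
  \max_(S : {set 'I_(size G) * 'I_m} | is_matching G L S) #|S|.

(* UMCD on the subinstance with receiver set V (side information A i :&: V) *)
Definition Bset (V : {set 'I_m}) (i : 'I_m) : {set 'I_m} := V :\: (A i :|: [set i]).

Definition umcd_row (V : {set 'I_m}) (w : 'I_m) : {set 'I_m} := w |: (A w :&: V).

Definition umcd_next (V N : {set 'I_m}) (G : seq {set 'I_m}) (w : 'I_m) : {set 'I_m} :=
  let G' := rcons G (umcd_row V w) in
  let N1 := N :\ w in
  N1 :\: [set i in N1 | mcm G' (i |: Bset V i) == (mcm G' (Bset V i)).+1].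

(* umcd_exec V N G k : starting from remaining set N and rows G, some
   execution of the loop (with some admissible tie-breaking) ends with
   output k (the final number of rows). *)
Inductive umcd_exec (V : {set 'I_m}) : {set 'I_m} -> seq {set 'I_m} -> nat -> Prop :=
| umcd_done G : umcd_exec V set0 G (size G)
| umcd_step N G w k :
    N != set0 -> w \in N ->
    (forall u, u \in N -> #|A w :&: V| <= #|A u :&: V|) ->
    umcd_exec V (umcd_next V N G w) (rcons G (umcd_row V w)) k ->
    umcd_exec V N G k.

Definition umcd_output (V : {set 'I_m}) (k : nat) : Prop := umcd_exec V V [::] k.

Definition beta_PUMCD (b : {set 'I_m} -> nat) : nat :=
  \big[minn/m]_(P : {set {set 'I_m}} | is_partition P) \sum_(M in P) b M.

End IC.

From mathcomp Require Import all_boot all_order zify.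
Set Implicit Arguments. Unset Strict Implicit.

(* For a block M with d = min_{i in M} |M :&: A i|, every run of UMCD on M
   keeps the invariant that any nonempty set X of rows covers at least
   |X| + d columns; with X all k rows this gives k <= |M| - d = beta_MDS M.
   The new row {w} :|: A w has |A w| + 1 > d entries, so it can only break the
   invariant by lying inside the cover of a tight set X1 of earlier rows.  Then
   X1 has deficiency at least 1 with respect to the columns B_w, and by the
   Koenig-Ore deficiency formula (Hall's theorem) adding column w raises the
   maximum matching by one: w would have been removed before being picked. *)

Section Hall.
Variables R C : finType.
Implicit Types (e : R -> C -> bool) (X Y : {set R}) (D : {set C}).

Definition nbh e X : {set C} := [set c | [exists r in X, e r c]].

Definition hall_cond e X0 := forall X, X \subset X0 -> #|X| <= #|nbh e X|.

Definition matches e X0 (f : R -> option C) :=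
  {in X0 &, injective f} /\ {in X0, forall r, exists2 c, f r = Some c & e r c}.

Definition avoiding e D r c := e r c && (c \notin D).

Lemma nbhU e X Y : nbh e (X :|: Y) = nbh e X :|: nbh e Y.
Proof.
apply/setP => c; rewrite !inE; apply/existsP/orP => [[r]|].
  rewrite inE => /andP[/orP[] rXY erc]; [left | right]; apply/existsP;
    by exists r; rewrite rXY erc.
by case=> /existsP[r /andP[rX erc]]; exists r; rewrite inE rX ?orbT.
Qed.

Lemma nbh_avoiding e D X : nbh e X \subset D :|: nbh (avoiding e D) X.
Proof.
apply/subsetP => c; rewrite !inE => /existsP[r /andP[rX erc]].
case: (boolP (c \in D)) => //= cD; apply/existsP; exists r.
by rewrite rX /avoiding erc cD.
Qed.

Lemma matches_glue e D X Y f g :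
  matches e X f -> {in X, forall r c, f r = Some c -> c \in D} ->
  matches (avoiding e D) Y g ->
  matches e (X :|: Y) (fun r => if r \in X then f r else g r).
Proof.
move=> [injf ef] fD [injg eg]; split.
  move=> r1 r2; rewrite !inE.
  have outD r r' : r \in X -> r' \notin X -> r' \in Y -> f r = g r' -> False.
    move=> rX r'X r'Y; have [c fc _] := ef r rX; have [c' gc' /andP[_ c'D]] := eg r' r'Y.
    by rewrite fc gc' => -[cc']; move: c'D; rewrite -cc' (fD r rX c fc).
  case: (boolP (_ \in X)) => r1X; case: (boolP (_ \in X)) => r2X //= r1Y r2Y.
  - exact: injf.
  - by move/(outD _ _ r1X r2X r2Y).
  - by move/esym/(outD _ _ r2X r1X r1Y).
  - exact: injg.
move=> r; rewrite inE; case: (boolP (r \in X)) => [rX _|rX /= rY]; first exact: ef.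
by have [c gc /andP[erc _]] := eg r rY; exists c.
Qed.

Section HallStep.
Variables (e : R -> C -> bool) (X0 : {set R}).
Hypothesis IH :
  forall e' X, #|X| < #|X0| -> hall_cond e' X -> exists f, matches e' X f.
Hypothesis hallX0 : hall_cond e X0.

Lemma hall_critical X :
  X \subset X0 -> X != set0 -> X != X0 -> #|nbh e X| <= #|X| ->
  exists f, matches e X0 f.
Proof.
move=> sXX0 nX neX critX.
have ltX : #|X| < #|X0| by rewrite proper_card // properEneq neX.
have [f mf] : exists f, matches e X f.
  by apply: IH => // Y sYX; apply: hallX0; apply: subset_trans sXX0.
have [g mg] : exists g, matches (avoiding e (nbh e X)) (X0 :\: X) g.
  apply: IH.
    by rewrite cardsD (setIidPr sXX0) -subn_gt0 subKn ?card_gt0 // ltnW.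
  move=> Y sY; have sYX0 : Y \subset X0 by apply: subset_trans sY (subsetDl _ _).
  have YX0 : Y :&: X = set0.
    apply/setP => r; rewrite !inE; apply/negbTE/andP => -[rY rX].
    by move: (subsetP sY r rY); rewrite inE rX.
  have := @hallX0 (Y :|: X); rewrite subUset sYX0 sXX0 => /(_ isT).
  have := cardsUI Y X; rewrite YX0 cards0 addn0 => ->.
  rewrite setUC nbhU => hYX.
  have := leq_trans hYX (subset_leq_card (setUS (nbh e X) (nbh_avoiding e (nbh e X) Y))).
  rewrite setUA setUid cardsU; lia.
have fX : {in X, forall r c, f r = Some c -> c \in nbh e X}.
  move=> r rX c frc; have [_ /(_ r rX) [c' fc' erc']] := mf.
  by rewrite inE; apply/existsP; exists r; move: frc; rewrite rX fc' => -[<-].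
exists (fun r => if r \in X then f r else g r).
rewrite -(setID X0 X) setIC (setIidPl sXX0).
exact: matches_glue mf fX mg.
Qed.

Lemma hall_surplus :
  X0 != set0 ->
  (forall X, X \subset X0 -> X != set0 -> X != X0 -> #|X| < #|nbh e X|) ->
  exists f, matches e X0 f.
Proof.
case/set0Pn=> r0 r0X0 surplus.
have : 0 < #|nbh e [set r0]| by have := @hallX0 [set r0]; rewrite sub1set r0X0 cards1; apply.
case/card_gt0P=> c0; rewrite inE => /existsP[_ /andP[/set1P-> er0c0]].
have [g mg] : exists g, matches (avoiding e [set c0]) (X0 :\ r0) g.
  apply: IH; first by rewrite (cardsD1 r0 X0) r0X0.
  move=> Y sY; have [->|nY] := eqVneq Y set0; first by rewrite cards0.
  have r0Y : r0 \notin Y by apply/negP => /(subsetP sY); rewrite !inE eqxx.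
  have neY : Y != X0 by apply: contraNneq r0Y => ->.
  have := leq_trans (surplus Y (subset_trans sY (subsetDl _ _)) nY neY)
                    (subset_leq_card (nbh_avoiding e [set c0] Y)).
  by rewrite cardsU cards1; lia.
have mr0 : matches e [set r0] (fun=> Some c0).
  by split=> [r1 r2 /set1P-> /set1P->|r /set1P->] //; exists c0.
exists (fun r => if r \in [set r0] then Some c0 else g r).
rewrite -(setD1K r0X0); apply: matches_glue mr0 _ mg => r _ c [<-].
exact: set11.
Qed.
End HallStep.

Theorem hall_marriage e X0 : hall_cond e X0 -> exists f, matches e X0 f.
Proof.
move: {2}#|X0|.+1 (ltnSn #|X0|) => n; elim: n e X0 => // n IH e X0 ltX0 hallX0.
have [->|nX0] := eqVneq X0 set0.
  by exists (fun=> None); split=> r; rewrite inE.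
have IH' e' X : #|X| < #|X0| -> hall_cond e' X -> exists f, matches e' X f.
  by move=> ltX; apply: IH; apply: leq_trans ltX _.
case: (boolP [exists X : {set R}, [&& X \subset X0, X != set0, X != X0 & #|nbh e X| <= #|X|]]).
  by case/existsP=> X /and4P[sX nX neX critX]; apply: (hall_critical IH' hallX0 sX).
move/existsPn=> noncrit; apply: (hall_surplus IH' hallX0 nX0) => X sX nX neX.
by have := noncrit X; rewrite sX nX neX ltnNge.
Qed.
End Hall.

Definition row_cover m (G : seq {set 'I_m}) n (X : {set 'I_n}) : {set 'I_m} :=
  \bigcup_(j in X) nth set0 G j.

Lemma row_coverU m (G : seq {set 'I_m}) n (X Y : {set 'I_n}) :
  row_cover G (X :|: Y) = row_cover G X :|: row_cover G Y.
Proof. exact: bigcup_setU. Qed.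

Lemma row_coverS m (G : seq {set 'I_m}) n (X Y : {set 'I_n}) :
  X \subset Y -> row_cover G X \subset row_cover G Y.
Proof. by move=> sXY; apply/bigcupsP => j jX; apply: bigcup_sup; apply: (subsetP sXY). Qed.

Lemma setD1_ord_max n (X : {set 'I_n.+1}) :
  X :\ ord_max = widen_ord (leqnSn n) @: [set j | widen_ord (leqnSn n) j \in X].
Proof.
apply/setP=> j; apply/setD1P/imsetP => [[jmax jX]|[i]]; last first.
  rewrite inE => iX ->; split=> //; apply/eqP => /(congr1 val) /= iN.
  by move: (ltn_ord i); rewrite iN ltnn.
have ltj : j < n.
  by rewrite ltn_neqAle -ltnS ltn_ord andbT; apply: contra jmax => /eqP jn; apply/eqP/val_inj.
by exists (Ordinal ltj); [rewrite inE (_ : widen_ord _ _ = j) // | ]; apply: val_inj.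
Qed.

Lemma row_cover_rcons m (G : seq {set 'I_m}) r (X : {set 'I_(size G).+1}) :
  let X1 := [set j | widen_ord (leqnSn (size G)) j \in X] in
  #|X| = (ord_max \in X) + #|X1| /\
  row_cover (rcons G r) X = (if ord_max \in X then r else set0) :|: row_cover G X1.
Proof.
move=> X1; have winj : injective (widen_ord (leqnSn (size G))).
  by move=> i j /(congr1 val) ij; apply: val_inj.
have coverD1 : row_cover (rcons G r) (X :\ ord_max) = row_cover G X1.
  rewrite /row_cover setD1_ord_max big_imset /=; last by move=> i j _ _; apply: winj.
  by apply: eq_bigr => j _; rewrite nth_rcons ltn_ord.
split; first by rewrite (cardsD1 ord_max) setD1_ord_max card_imset.
rewrite -coverD1; case: ifP => [maxX|/negbT maxX].
  by rewrite {1}/row_cover (big_setD1 _ maxX) /= nth_rcons ltnn eqxx.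
by rewrite set0U (setDidPl _) // disjoint_sym disjoints1.
Qed.

Lemma row_cover_sub m (G : seq {set 'I_m}) (V : {set 'I_m}) n (Y : {set 'I_n}) :
  (forall j, nth set0 G j \subset V) -> row_cover G Y \subset V.
Proof. by move=> rowsV; apply/bigcupsP => j _; apply: rowsV. Qed.

Lemma card_row_cover_submod m (G : seq {set 'I_m}) (L : {set 'I_m}) n (X Y : {set 'I_n}) :
  #|L :&: row_cover G (X :|: Y)| + #|L :&: row_cover G (X :&: Y)| <=
  #|L :&: row_cover G X| + #|L :&: row_cover G Y|.
Proof.
rewrite row_coverU setIUr -[leqRHS]cardsUI leq_add2l; apply: subset_leq_card.
by rewrite setIACA setIid setIS // subsetI !row_coverS ?subsetIl ?subsetIr.
Qed.

Section Matchings.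
Variable m : nat.
Implicit Types (G : seq {set 'I_m}) (L : {set 'I_m}).

Lemma matchingP G L (S : {set 'I_(size G) * 'I_m}) :
  is_matching m G L S <->
  {in S, forall p : 'I_(size G) * 'I_m, (p.2 \in L) && (p.2 \in nth set0 G p.1)} /\
  {in S &, forall p q, (p.1 == q.1) || (p.2 == q.2) -> p = q}.
Proof.
split.
  case/andP=> /forall_inP entries /forall_inP disj; split=> // p q pS qS.
  by move/forall_inP: (disj p pS) => /(_ q qS) /implyP Hpq /Hpq /eqP.
case=> entries disj; apply/andP; split; first exact/forall_inP.
apply/forall_inP=> p pS; apply/forall_inP=> q qS; apply/implyP=> pq.
by rewrite (disj p q pS qS pq).
Qed.

Lemma mcm_witness G L : exists2 S, is_matching m G L S & #|S| = mcm m G L.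
Proof.
have : 0 < #|[pred S : {set 'I_(size G) * 'I_m} | is_matching m G L S]|.
  by apply/card_gt0P; exists set0; rewrite inE; apply/matchingP; split=> p; rewrite inE.
case/(eq_bigmax_cond (fun S : {set _} => #|S|)) => S; rewrite inE => mS eS.
by exists S; rewrite // /mcm eS.
Qed.

Lemma card_matching_le G L S : is_matching m G L S -> #|S| <= mcm m G L.
Proof. by move=> mS; apply: (@leq_bigmax_cond _ (is_matching m G L) (fun S => #|S|)). Qed.

Lemma mcm_deficiency G L (X : {set 'I_(size G)}) :
  mcm m G L + #|X| <= size G + #|L :&: row_cover G X|.
Proof.
have [S /matchingP[entries disj] <-] := mcm_witness G L.
pose B := [set p : 'I_(size G) * 'I_m | p.1 \in X].
have inX : #|S :&: B| <= #|L :&: row_cover G X|.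
  rewrite -(@card_in_imset _ _ snd); last first.
    by move=> p q /setIP[pS _] /setIP[qS _] pq; apply: disj => //; rewrite pq eqxx orbT.
  apply/subset_leq_card/subsetP => c /imsetP[p /setIP[pS]]; rewrite inE => pX ->.
  have /andP[pL pG] := entries p pS.
  by rewrite inE pL; apply/bigcupP; exists p.1.
have outX : #|S :\: B| <= #|~: X|.
  rewrite -(@card_in_imset _ _ fst); last first.
    by move=> p q /setDP[pS _] /setDP[qS _] pq; apply: disj => //; rewrite pq eqxx.
  by apply/subset_leq_card/subsetP => c /imsetP[p /setDP[_]]; rewrite !inE => pX ->.
have := leq_add inX outX; rewrite cardsID; have := cardsC X; rewrite card_ord; lia.
Qed.

Lemma mcm_setU1 G L w : mcm m G (w |: L) <= (mcm m G L).+1.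
Proof.
have [S /matchingP[entries disj] <-] := mcm_witness G (w |: L).
pose B := [set p : 'I_(size G) * 'I_m | p.2 != w].
have mSB : is_matching m G L (S :&: B).
  apply/matchingP; split=> [p /setIP[pS]|p q /setIP[pS _] /setIP[qS _]]; last exact: disj.
  by rewrite inE => pw; have := entries p pS; rewrite !inE (negbTE pw).
have atw : #|S :\: B| <= 1.
  apply/card_le1_eqP => p q /setDP[pS]; rewrite inE negbK => /eqP pw.
  by case/setDP=> qS; rewrite inE negbK => /eqP qw; apply: disj => //; rewrite pw qw eqxx orbT.
have := leq_add (card_matching_le mSB) atw; rewrite cardsID; lia.
Qed.

(* The columns L padded with n dummy columns that are adjacent to every row:
   Hall's theorem on this graph is the Koenig-Ore deficiency formula. *)
Definition padded_entry G L n (r : 'I_(size G)) (c : 'I_m + 'I_n) :=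
  if c is inl c then (c \in L) && (c \in nth set0 G r) else true.
Arguments padded_entry : clear implicits.

Lemma hall_cond_padded G L n :
  (forall X : {set 'I_(size G)}, #|X| <= #|L :&: row_cover G X| + n) ->
  hall_cond (padded_entry G L n) setT.
Proof.
move=> deficiency X _; have [->|/set0Pn[r0 r0X]] := eqVneq X set0; first by rewrite cards0.
have snbh :
    inl @: (L :&: row_cover G X) :|: inr @: [set: 'I_n] \subset nbh (padded_entry G L n) X.
  apply/subsetP => c; case/setUP => /imsetP[x + ->]; rewrite inE.
    case/andP=> xL /bigcupP[r rX xr]; rewrite inE; apply/existsP; exists r.
    by rewrite rX /padded_entry xL.
  by move=> _; rewrite inE; apply/existsP; exists r0; rewrite r0X.
apply: leq_trans (deficiency X) (leq_trans _ (subset_leq_card snbh)).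
rewrite cardsU !card_imset; [|exact: inr_inj|exact: inl_inj].
have -> : inl @: (L :&: row_cover G X) :&: inr @: [set: 'I_n] = set0.
  by apply/setP=> c; rewrite !inE; apply/negbTE/andP => -[/imsetP[? _ ->] /imsetP[]].
by rewrite cards0 subn0 cardsT card_ord.
Qed.

Lemma mcm_padded G L n f :
  matches (padded_entry G L n) setT f -> size G <= mcm m G L + n.
Proof.
case=> injf ef.
pose S := [set p : 'I_(size G) * 'I_m | f p.1 == Some (inl p.2)].
have mS : is_matching m G L S.
  apply/matchingP; split=> [p|[r1 c1] [r2 c2]]; rewrite !inE /=.
    by move/eqP=> fp; have [c fc] := ef p.1 (in_setT _); rewrite fp in fc; case: fc => <-.
  move=> /eqP f1 /eqP f2 /orP[/eqP r12|/eqP c12]; first by move: f1; rewrite r12 f2 => -[->].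
  have r12 : r1 = r2 by apply: injf; rewrite ?in_setT // f1 f2 c12.
  by rewrite r12 c12.
pose R1 := [set r : 'I_(size G) | [exists c, f r == Some (inl c)]].
have matched : #|R1| <= #|S|.
  apply: leq_trans (leq_imset_card fst S); apply/subset_leq_card/subsetP => r.
  by rewrite inE => /existsP[c frc]; apply/imsetP; exists (r, c); rewrite ?inE.
have unmatched : #|~: R1| <= n.
  rewrite -(@card_in_imset _ _ f); last by move=> x y _ _; apply: injf; rewrite in_setT.
  have cardn : #|[set (Some (inr j) : option ('I_m + 'I_n)) | j in [set: 'I_n]]| = n.
    by rewrite card_imset ?cardsT ?card_ord // => x y [].
  rewrite -[X in _ <= X]cardn.
  apply/subset_leq_card/subsetP => c /imsetP[r]; rewrite !inE => r1 ->.
  have [[c'|j] frc _] := ef r (in_setT _); rewrite frc.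
    by case/existsP: r1; exists c'; rewrite frc.
  by apply/imsetP; exists j.
have := leq_add matched unmatched; rewrite cardsC card_ord => /leq_trans; apply.
by rewrite leq_add2r; apply: card_matching_le mS.
Qed.

Lemma deficiency_mcm G L n :
  (forall X : {set 'I_(size G)}, #|X| <= #|L :&: row_cover G X| + n) ->
  size G <= mcm m G L + n.
Proof. by move/hall_cond_padded/hall_marriage => [f /mcm_padded]. Qed.

End Matchings.

Section UMCD.
Variables (m : nat) (A : 'I_m -> {set 'I_m}) (V : {set 'I_m}) (d : nat).
Hypothesis notin_A : forall i, i \notin A i.
Implicit Types (G : seq {set 'I_m}) (w : 'I_m).

Local Notation row := (umcd_row m A V).
Local Notation Bset := (Bset m A V).

Definition has_surplus G :=
  forall X : {set 'I_(size G)}, X != set0 -> #|X| + d <= #|row_cover G X|.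

Lemma card_umcd_row w : #|row w| = (#|A w :&: V|).+1.
Proof. by rewrite cardsU1 inE (negbTE (notin_A w)). Qed.

Lemma setD_Bset w : w \in V -> V :\: Bset w = row w.
Proof.
move=> wV; apply/setP=> c; rewrite !inE.
case: (eqVneq c w) => [->|_]; rewrite ?wV ?orbT ?orbF //=.
by case: (c \in A w); case: (c \in V).
Qed.

Section TightRows.
Variables (G : seq {set 'I_m}) (w : 'I_m) (X1 : {set 'I_(size G)}).
Hypotheses (surplusG : has_surplus G) (rowsV : forall j, nth set0 G j \subset V).
Hypotheses (wV : w \in V) (d_le_Aw : d <= #|A w :&: V|).
Hypotheses (row_sub : row w \subset row_cover G X1)
           (tightX1 : #|row_cover G X1| <= #|X1| + d).

Local Notation L := (Bset w).
Local Notation K := (size G).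
Local Notation mu := (mcm m G L).

Lemma notin_Bset : w \notin L.
Proof. by rewrite !inE eqxx orbT. Qed.

Lemma row_coverD_Bset n (Y : {set 'I_n}) : row_cover G Y :\: L = row_cover G Y :&: row w.
Proof. by rewrite -(setD_Bset wV) setIDA (setIidPl (row_cover_sub Y rowsV)). Qed.

Lemma card_Bset_tight : #|L :&: row_cover G X1| + (#|A w :&: V|).+1 = #|row_cover G X1|.
Proof.
by rewrite -card_umcd_row -(setIidPr row_sub) -row_coverD_Bset setIC cardsID.
Qed.

Lemma mcm_lt_size : mu < K.
Proof. have := mcm_deficiency L X1; have := card_Bset_tight; lia. Qed.

Lemma card_row_cover_notin n (Z : {set 'I_n}) :
  w \notin row_cover G Z -> #|row_cover G Z| <= #|L :&: row_cover G Z| + #|A w :&: V|.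
Proof.
move=> wZ; rewrite -(cardsID L) setIC leq_add2l row_coverD_Bset.
apply/subset_leq_card/subsetP => c /setIP[cZ]; rewrite in_setU1 => /predU1P[cw|//].
by move: wZ; rewrite -cw cZ.
Qed.

(* A set Y violating the bound must be of maximum deficiency and avoid w;
   uncrossing it with the tight set X1 (submodularity of the cover) leaves
   Y :&: X1 too deficient for [has_surplus G]. *)
Lemma deficiency_setU1_Bset (Y : {set 'I_(size G)}) :
  #|Y| <= #|(w |: L) :&: row_cover G Y| + (K - mu - 1).
Proof.
rewrite leqNgt; apply/negP => hY.
have defY := mcm_deficiency L Y.
have wY : w \notin row_cover G Y.
  apply: contraTN hY => wY; rewrite -leqNgt setIUl (setIidPl _) ?sub1set //.
  rewrite cardsU1 inE (negbTE notin_Bset) /=.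
  move: defY; have := mcm_lt_size; set c := #|L :&: _|; set y := #|Y|; lia.
have coverYw : (w |: L) :&: row_cover G Y = L :&: row_cover G Y.
  apply/setP=> c; rewrite !inE; case: eqVneq => [->|_] //=.
  by rewrite (negbTE wY) andbF.
rewrite coverYw in hY.
have coverZ := card_row_cover_notin (contra (subsetP (row_coverS G (subsetIl Y X1)) w) wY).
have surplusZ : #|Y :&: X1| = 0 \/ #|Y :&: X1| + d <= #|row_cover G (Y :&: X1)|.
  by have [->|/surplusG] := eqVneq (Y :&: X1) set0; [left; apply: cards0 | right].
have defYX := mcm_deficiency L (Y :|: X1).
have submod := card_row_cover_submod G L Y X1.
have cardYX := cardsUI Y X1.
have tight := card_Bset_tight.
have lt_mu := mcm_lt_size.
move: hY defY defYX submod cardYX tight lt_mu d_le_Aw tightX1 coverZ surplusZ.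
(* name the cardinals, so that lia sees equal ones as the same atom *)
set y := #|Y|; set x := #|X1|; set u := #|Y :|: X1|; set z := #|Y :&: X1|.
set cy := #|L :&: row_cover G Y|; set cx := #|L :&: row_cover G X1|.
set cu := #|L :&: row_cover G (Y :|: X1)|; set cz := #|L :&: row_cover G (Y :&: X1)|.
set a := #|A w :&: V|; set vx := #|row_cover G X1|; set vz := #|row_cover G (Y :&: X1)|.
lia.
Qed.

Lemma mcm_setU1_Bset_tight : mcm m G (w |: L) = mu.+1.
Proof.
apply/eqP; rewrite eqn_leq mcm_setU1 /=.
have := deficiency_mcm deficiency_setU1_Bset; have := mcm_lt_size; lia.
Qed.
End TightRows.

Lemma has_surplus_rcons G w :
  has_surplus G -> (forall j, nth set0 G j \subset V) -> w \in V -> d <= #|A w :&: V| ->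
  (G != [::] -> mcm m G (w |: Bset w) != (mcm m G (Bset w)).+1) ->
  has_surplus (rcons G (row w)).
Proof.
move=> surplusG rowsV wV d_le_Aw kept; rewrite /has_surplus size_rcons => X nX.
have [cardX coverX] := row_cover_rcons (row w) X.
move: nX; rewrite -card_gt0 cardX coverX; set X1 := [set j | _ \in X].
have [X10|X1n] := eqVneq X1 set0.
  rewrite X10 cards0 addn0 /row_cover big_set0 setU0.
  by case: (ord_max \in X) => //= _; rewrite card_umcd_row add1n ltnS.
case: (ord_max \in X) => _ /=; last by rewrite set0U; apply: surplusG.
rewrite add1n addSn.
have [row_sub|/subsetPn[c cw notc]] := boolP (row w \subset row_cover G X1); last first.
  apply: leq_trans (_ : #|c |: row_cover G X1| <= _); last first.
    by apply/subset_leq_card; rewrite setSU // sub1set.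
  by rewrite cardsU1 notc add1n ltnS surplusG.
have [tight|loose] := leqP #|row_cover G X1| (#|X1| + d); last first.
  exact: leq_trans loose (subset_leq_card (subsetUr _ _)).
have G_neq0 : G != [::].
  by rewrite -size_eq0 -lt0n; case/set0Pn: X1n => j _; apply: leq_ltn_trans (ltn_ord j).
have augments := mcm_setU1_Bset_tight surplusG rowsV wV d_le_Aw row_sub tight.
by move: (kept G_neq0); rewrite augments eqxx.
Qed.

Definition umcd_inv (N : {set 'I_m}) G :=
  [/\ N \subset V, forall j, nth set0 G j \subset V, has_surplus G &
      {in N, forall u, G != [::] -> mcm m G (u |: Bset u) != (mcm m G (Bset u)).+1}].

Hypothesis d_le_A : forall u, u \in V -> d <= #|A u :&: V|.

Lemma umcd_exec_bound N G k :
  umcd_exec m A V N G k -> umcd_inv N G -> 0 < k -> k + d <= #|V|.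
Proof.
elim=> {N G k} [G|N G w k _ wN _ _ IH] [sNV rowsV surplusG kept] k_gt0.
  have := @surplusG [set: _]; rewrite -card_gt0 cardsT card_ord => /(_ k_gt0).
  by move/leq_trans; apply; apply/subset_leq_card/row_cover_sub.
have wV : w \in V by apply: (subsetP sNV).
apply: IH => //; split.
- exact: subset_trans (subsetDl _ _) (subset_trans (subsetDl _ _) sNV).
- move=> j; rewrite nth_rcons; case: ifP => _; first exact: rowsV.
  by case: ifP => _; rewrite ?sub0set // subUset sub1set wV subsetIr.
- by apply: has_surplus_rcons => //; [apply: d_le_A | apply: kept].
- move=> u; rewrite /umcd_next inE => /andP[notremoved uN] _.
  by apply: contraNN notremoved => augments; rewrite inE uN.
Qed.

Lemma umcd_output_bound k : V != set0 -> umcd_output m A V k -> k + d <= #|V|.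
Proof.
move=> /set0Pn[u uV] out; have [->|k_gt0] := posnP k.
  exact: leq_trans (d_le_A uV) (subset_leq_card (subsetIr _ _)).
apply: umcd_exec_bound out _ k_gt0; split=> //.
- by move=> j; rewrite nth_nil sub0set.
- by move=> X /set0Pn[[]].
Qed.

End UMCD.

Lemma umcd_output_le_beta_MDS m (A : 'I_m -> {set 'I_m}) (M : {set 'I_m}) k :
  (forall i, i \notin A i) -> M != set0 -> umcd_output m A M k -> k <= beta_MDS m A M.
Proof.
move=> notin_A M_neq0 out; rewrite /beta_MDS.
set d := \big[minn/#|M|]_(i in M) #|M :&: A i|.
have d_le_A u : u \in M -> d <= #|A u :&: M|.
  move=> uM; rewrite setIC /d.
  by have := Order.TotalTheory.bigmin_le_cond #|M| (fun i => #|M :&: A i|) uM; rewrite minEnat.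
have := umcd_output_bound notin_A d_le_A M_neq0 out; lia.
Qed.

Theorem proposition12 (m : nat) (A : 'I_m -> {set 'I_m})
    (hA : forall i, i \notin A i)
    (b : {set 'I_m} -> nat)
    (hb : forall M : {set 'I_m}, M != set0 -> umcd_output m A M (b M)) :
  beta_PUMCD m b <= beta_PCC m A.
Proof.
apply: (big_ind2 (fun x y => x <= y)) => // [x1 x2 y1 y2 le1 le2|P partP].
  by rewrite leq_min !geq_min le1 le2 orbT.
apply: leq_sum => M MP; have M_neq0 : M != set0.
  by apply: contraTneq MP => ->; case/and3P: partP.
exact: umcd_output_le_beta_MDS (hb M M_neq0).
Qed.
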